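(* Let $k\ge4$, $\lambda>0$, $0<\theta<1$. Put $\theta_c(k)=\frac{k-1}{k+1}$, $\theta_c'(k)=\frac{k-1}{k}$, $\lambda_{\rm cr}'(k)=\frac{1}{k-1-k\theta}$ (for $\theta<\theta'_c(k)$) and $\lambda_{\rm cr}(k)=\frac{1}{k-1-(k+1)\theta}\bigl(\frac{k+1}{k}\bigr)^k$ (for $\theta<\theta_c(k)$). Then: (1) if $\theta\ge\theta'_c(k)$, or $\theta<\theta'_c(k)$ and $\lambda<\lambda'_{\rm cr}(k)$, there exists exactly one TISGM; (2) if $\theta<\theta_c(k)$ and $\lambda>\lambda_{\rm cr}(k)$, there exist at least three TISGMs.
   Context: SCWR model on the Cayley tree of order $k$ (each vertex has $k$ direct successors), spins in $\{-1,0,1\}$, activity $\lambda>0$, $\theta=e^{-J\beta}$; ferromagnetic means $0<\theta<1$. TISGMs are in one-to-one correspondence with the solutions $(x,y)\in(0,\infty)^2$ of $x=\lambda\bigl(\frac{1+x+\theta y}{1+x+y}\bigr)^k$, $y=\lambda\bigl(\frac{1+\theta x+y}{1+x+y}\bigr)^k$; the number of TISGMs is the number of such solutions. *)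

From Stdlib Require Import Reals Lra.
Open Scope R_scope.

(* (x,y) is a positive solution of the TISGM system for the SCWR model
   on the Cayley tree of order k with activity lam and theta = exp(-J beta). *)
Definition is_TISGM_sol (k : nat) (lam theta : R) (x y : R) : Prop :=
  0 < x /\ 0 < y /\
  x = lam * ((1 + x + theta * y) / (1 + x + y)) ^ k /\
  y = lam * ((1 + theta * x + y) / (1 + x + y)) ^ k.

(* TISGMs are in bijection with positive solutions. *)
Definition exactly_one_TISGM (k : nat) (lam theta : R) : Prop :=
  exists x y, is_TISGM_sol k lam theta x y /\
    forall x' y', is_TISGM_sol k lam theta x' y' -> x' = x /\ y' = y.

Definition at_least_three_TISGM (k : nat) (lam theta : R) : Prop :=
  exists x1 y1 x2 y2 x3 y3,
    is_TISGM_sol k lam theta x1 y1 /\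
    is_TISGM_sol k lam theta x2 y2 /\
    is_TISGM_sol k lam theta x3 y3 /\
    (x1, y1) <> (x2, y2) /\ (x1, y1) <> (x3, y3) /\ (x2, y2) <> (x3, y3).

Definition theta_c (k : nat) : R := (INR k - 1) / (INR k + 1).
Definition theta_c' (k : nat) : R := (INR k - 1) / INR k.
Definition lambda_cr' (k : nat) (theta : R) : R := 1 / (INR k - 1 - INR k * theta).
Definition lambda_cr (k : nat) (theta : R) : R :=
  1 / (INR k - 1 - (INR k + 1) * theta) * ((INR k + 1) / INR k) ^ k.

From Stdlib Require Import Reals Lra Lia Psatz.
Open Scope R_scope.

(* On the diagonal the system reduces to
     x = lam g(x)^k with g decreasing, so there is exactly one solution with
     x = y (intermediate value theorem plus monotonicity).
   - No asymmetric solution under hypothesis (1).  A solution with y < x is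
     encoded by s = 1 + x + y and ratios th < v < u < 1 with x = lam u^k,
     y = lam v^k ([asym_profile]).  Two elementary inequalities for powers
     (a trapezoid bound when th >= k/(k+2), a mean-value bound when
     th < k/(k+2)) show that no such profile exists; k >= 4 is needed only to
     cover the whole range th < theta_c' k by these two cases.
   - Asymmetric solutions under hypothesis (2).  Writing u/v = p > 1 gives a
     rational parametrization by geometric sums; the remaining scalar
     equation in p has a root p > 1 by the intermediate value theorem,
     precisely when lam > lambda_cr.  Together with its mirror image (y, x)
     and the symmetric solution this gives three solutions. *)

Lemma pow_lt_pow_l a b n : 0 <= a -> a < b -> a ^ S n < b ^ S n.
Proof.
  intros ha hab. induction n as [|n IH]; [simpl; lra|].
  change (a * a ^ S n < b * b ^ S n).
  assert (0 <= a ^ S n) by (apply pow_le; lra).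
  nra.
Qed.

Lemma pow_sub_le_mvt u v n : 0 <= v -> v <= u ->
  u ^ S n - v ^ S n <= INR (S n) * u ^ n * (u - v).
Proof.
  intros hv hvu. induction n as [|n IH]; [simpl; lra|].
  rewrite S_INR.
  assert (hpow : v ^ S n <= u ^ S n) by (apply pow_incr; lra).
  assert (0 <= u ^ n) by (apply pow_le; lra).
  assert (split_diff : u ^ S (S n) - v ^ S (S n) =
                       u * (u ^ S n - v ^ S n) + v ^ S n * (u - v)) by (simpl; ring).
  assert (u * (u ^ S n - v ^ S n) <= u * (INR (S n) * u ^ n * (u - v)))
    by (apply Rmult_le_compat_l; lra).
  assert (v ^ S n * (u - v) <= u ^ S n * (u - v)) by (apply Rmult_le_compat_r; lra).
  simpl in *. nra.
Qed.

(* Trapezoid bound, expressing the convexity of x |-> x^n on [v, u]: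
   2 (u^(n+1) - v^(n+1)) <= (n+1) (u - v) (u^n + v^n).  It follows by a
   two-step induction from  D(n+3) = (u-v) S(n+2) + uv D(n+1)  and
   uv S(n) <= S(n+2), where D(j) = u^j - v^j and S(j) = u^j + v^j. *)
Lemma pow_sub_trapezoid u v n : 0 <= v -> v <= u ->
  2 * (u ^ S n - v ^ S n) <= INR (S n) * (u - v) * (u ^ n + v ^ n).
Proof.
  intros hv hvu.
  set (P := fun j => 2 * (u ^ S j - v ^ S j) <= INR (S j) * (u - v) * (u ^ j + v ^ j)).
  enough (two_steps : forall j, P j /\ P (S j)) by apply two_steps.
  induction j as [|j [IH IH_next]].
  { unfold P; simpl; split; lra. }
  split; [exact IH_next|]. unfold P.
  assert (diff_rec : u ^ S (S (S j)) - v ^ S (S (S j)) =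
          (u - v) * (u ^ S (S j) + v ^ S (S j)) + u * v * (u ^ S j - v ^ S j))
    by (simpl; ring).
  assert (sum_grows : u * v * (u ^ j + v ^ j) <= u ^ S (S j) + v ^ S (S j)).
  { assert (v ^ S j <= u ^ S j) by (apply pow_incr; lra).
    assert (u ^ S (S j) + v ^ S (S j) - u * v * (u ^ j + v ^ j)
            = (u ^ S j - v ^ S j) * (u - v)) by (simpl; ring).
    nra. }
  assert (IH' : u * v * (2 * (u ^ S j - v ^ S j)) <=
                u * v * (INR (S j) * (u - v) * (u ^ j + v ^ j)))
    by (apply Rmult_le_compat_l; [nra | exact IH]).
  rewrite diff_rec, !S_INR. rewrite S_INR in IH'.
  assert (0 <= INR j) by apply pos_INR.
  assert (INR j * (u - v) * (u * v * (u ^ j + v ^ j))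
          <= INR j * (u - v) * (u ^ S (S j) + v ^ S (S j)))
    by (apply Rmult_le_compat_l; nra).
  nra.
Qed.

Lemma pow_bernoulli_bound u n : 0 <= u <= 1 -> u ^ n * (INR n + 1 - INR n * u) <= 1.
Proof.
  intros hu. induction n as [|n IH]; [simpl; lra|].
  rewrite S_INR.
  assert (0 <= u ^ n) by (apply pow_le; lra).
  assert (0 <= INR n) by apply pos_INR.
  assert (step : u ^ S n * (INR n + 1 + 1 - (INR n + 1) * u) - u ^ n * (INR n + 1 - INR n * u)
                 = - ((INR n + 1) * u ^ n * (1 - u) * (1 - u))) by (simpl; ring).
  assert (0 <= (INR n + 1) * u ^ n * (1 - u) * (1 - u))
    by (repeat apply Rmult_le_pos; lra).
  lra.
Qed.

(* When a >= (n+1)/n, the polynomial a u^n - u^(n+1) is nondecreasing on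
   [0, 1], hence bounded there by its value a - 1 at u = 1. *)
Lemma pow_gap_le a u n : 0 <= u <= 1 -> INR n + 1 <= a * INR n ->
  a * u ^ n - u ^ S n <= a - 1.
Proof.
  intros hu ha.
  pose proof (pow_bernoulli_bound u n hu) as bern.
  assert (hun : u ^ n <= 1) by (rewrite <- (pow1 n); apply pow_incr; lra).
  assert (hn : 0 < INR n) by (destruct n; [simpl in ha; lra | apply lt_0_INR; lia]).
  assert (a * INR n * (1 - u ^ n) >= (INR n + 1) * (1 - u ^ n)) by nra.
  assert (INR n * (a - 1 - (a * u ^ n - u ^ S n)) >= 0) by (simpl; nra).
  nra.
Qed.

Lemma sol_swap k lam th x y :
  is_TISGM_sol k lam th x y -> is_TISGM_sol k lam th y x.
Proof.
  intros (hx & hy & ex & ey).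
  repeat split; try lra.
  - rewrite ey at 1. do 3 f_equal; ring.
  - rewrite ex at 1. do 3 f_equal; ring.
Qed.

Definition sym_ratio (th x : R) : R := (1 + (1 + th) * x) / (1 + 2 * x).

Lemma sym_sol_iff k lam th x :
  is_TISGM_sol k lam th x x <-> 0 < x /\ x = lam * sym_ratio th x ^ k.
Proof.
  unfold is_TISGM_sol, sym_ratio.
  replace (1 + x + th * x) with (1 + (1 + th) * x) by ring.
  replace (1 + th * x + x) with (1 + (1 + th) * x) by ring.
  replace (1 + x + x) with (1 + 2 * x) by ring.
  tauto.
Qed.

Lemma sym_ratio_pos th x : 0 < th -> 0 <= x -> 0 < sym_ratio th x.
Proof. intros. unfold sym_ratio. apply Rdiv_lt_0_compat; nra. Qed.

Lemma sym_ratio_decreasing th a b : th < 1 -> 0 <= a -> a < b ->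
  sym_ratio th b < sym_ratio th a.
Proof.
  intros h1 ha hab.
  assert (gap : sym_ratio th a - sym_ratio th b
                = (1 - th) * (b - a) / ((1 + 2 * a) * (1 + 2 * b)))
    by (unfold sym_ratio; field; lra).
  assert (0 < (1 - th) * (b - a) / ((1 + 2 * a) * (1 + 2 * b)))
    by (apply Rdiv_lt_0_compat; nra).
  lra.
Qed.

Lemma sym_ratio_0 th : sym_ratio th 0 = 1.
Proof. unfold sym_ratio. field. Qed.

(* There is a symmetric solution: intermediate value theorem for
   x - lam g(x)^k on [0, lam]. *)
Lemma sym_solution_exists k lam th : (1 <= k)%nat -> 0 < lam -> 0 < th < 1 ->
  exists x, is_TISGM_sol k lam th x x.
Proof.
  intros hk hlam hth.
  set (f := fun x => x - lam * sym_ratio th x ^ k).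
  assert (cont : forall x, 0 <= x <= lam -> continuity_pt f x)
    by (intros x hx; unfold f, sym_ratio; reg; lra).
  assert (f0 : f 0 < 0) by (unfold f; rewrite sym_ratio_0, pow1; lra).
  assert (flam : 0 < f lam).
  { assert (g_lt : sym_ratio th lam < 1)
      by (rewrite <- (sym_ratio_0 th); apply sym_ratio_decreasing; lra).
    pose proof (sym_ratio_pos th lam ltac:(lra) ltac:(lra)).
    pose proof (pow_lt_1_compat (sym_ratio th lam) k ltac:(lra) ltac:(lia)).
    unfold f; nra. }
  destruct (Ranalysis5.IVT_interv f 0 lam cont hlam f0 flam) as [x [hx fx]].
  exists x. apply sym_sol_iff.
  assert (x <> 0) by (intros ->; lra).
  unfold f in fx. split; lra.
Qed.

(* The symmetric solution is unique, since x |-> lam g(x)^k is decreasing. *)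
Lemma sym_solution_unique k lam th x z : (1 <= k)%nat -> 0 < lam -> 0 < th < 1 ->
  is_TISGM_sol k lam th x x -> is_TISGM_sol k lam th z z -> x = z.
Proof.
  intros hk hlam hth hx hz.
  assert (no_smaller : forall a b, is_TISGM_sol k lam th a a ->
            is_TISGM_sol k lam th b b -> ~ a < b).
  { intros a b [ha ea]%sym_sol_iff [hb eb]%sym_sol_iff hab.
    destruct k as [|m]; [lia|].
    pose proof (pow_lt_pow_l _ _ m (Rlt_le _ _ (sym_ratio_pos th b ltac:(lra) ltac:(lra)))
                  (sym_ratio_decreasing th a b ltac:(lra) ltac:(lra) hab)).
    nra. }
  destruct (Rtotal_order x z) as [lt | [eq | gt]]; auto.
  - exfalso. exact (no_smaller x z hx hz lt).
  - exfalso. exact (no_smaller z x hz hx gt).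
Qed.

(* An asymmetric solution x > y is encoded by s = 1 + x + y and the two
   ratios u = (1 + x + th y)/s, v = (1 + th x + y)/s, so that x = lam u^k and
   y = lam v^k.  These satisfy th < v < u < 1 and the two relations below;
   the non-existence results only use these relations. *)
Definition asym_profile (k : nat) (lam th s u v : R) : Prop :=
  0 < s /\ th < v /\ v < u /\ u < 1 /\
  s = 1 + lam * u ^ k + lam * v ^ k /\
  s * (u - v) = (1 - th) * lam * (u ^ k - v ^ k).

Lemma asym_profile_of_sol k lam th x y : 0 < th < 1 ->
  is_TISGM_sol k lam th x y -> y < x -> exists s u v, asym_profile k lam th s u v.
Proof.
  intros hth (hx & hy & ex & ey) hyx.
  set (s := 1 + x + y) in *.
  assert (hs : 0 < s) by (unfold s; lra).
  set (u := (1 + x + th * y) / s) in *.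
  set (v := (1 + th * x + y) / s) in *.
  assert (v_gap : v - th = (1 - th) * (1 + y) / s) by (unfold v, s; field; lra).
  assert (u_gap : 1 - u = (1 - th) * y / s) by (unfold u, s; field; lra).
  assert (uv_gap : u - v = (1 - th) * (x - y) / s) by (unfold u, v, s; field; lra).
  assert (0 < (1 - th) * (1 + y) / s) by (apply Rdiv_lt_0_compat; nra).
  assert (0 < (1 - th) * y / s) by (apply Rdiv_lt_0_compat; nra).
  assert (0 < (1 - th) * (x - y) / s) by (apply Rdiv_lt_0_compat; nra).
  exists s, u, v. repeat split; try lra.
  - unfold s at 1. lra.
  - transitivity ((1 - th) * (x - y)); [rewrite uv_gap; field; lra | nra].
Qed.

(* No profile exists when th >= k/(k+2): by the trapezoid bound,
   2s <= (1-th) lam k (u^(k-1) + v^(k-1)) <= 2 th lam (u^(k-1) + v^(k-1))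
   < 2 lam (u^k + v^k) < 2s. *)
Lemma no_profile_high_theta n lam th s u v : 0 < lam -> 0 < th ->
  INR (S n) <= th * (INR (S n) + 2) -> ~ asym_profile (S n) lam th s u v.
Proof.
  intros hlam hth hhigh (hs & hv & hvu & hu & s_eq & s_gap).
  pose proof (pow_sub_trapezoid u v n ltac:(lra) ltac:(lra)) as trap.
  assert (0 <= u ^ n) by (apply pow_le; lra).
  assert (0 <= v ^ n) by (apply pow_le; lra).
  assert (gap_bound : 2 * s * (u - v) <=
          (1 - th) * lam * (INR (S n) * (u - v) * (u ^ n + v ^ n))).
  { rewrite Rmult_assoc, s_gap.
    replace (2 * ((1 - th) * lam * (u ^ S n - v ^ S n)))
      with ((1 - th) * lam * (2 * (u ^ S n - v ^ S n))) by ring.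
    apply Rmult_le_compat_l; [nra | exact trap]. }
  assert (s_bound : 2 * s <= (1 - th) * lam * INR (S n) * (u ^ n + v ^ n))
    by (apply (Rmult_le_reg_r (u - v)); nra).
  assert ((1 - th) * INR (S n) <= 2 * th) by lra.
  assert (th * (u ^ n + v ^ n) <= u ^ S n + v ^ S n) by (simpl; nra).
  assert (0 <= lam * (u ^ n + v ^ n)) by nra.
  nra.
Qed.

(* No profile exists when (1-th)(k-1) >= 1 and lam ((1-th)k - 1) <= 1: by the
   mean-value bound s <= a lam u^(k-1) with a = (1-th)k, whence
   1 < lam (a u^(k-1) - u^k) <= lam (a - 1) <= 1. *)
Lemma no_profile_low_lambda n lam th s u v : 0 < lam -> 0 < th ->
  1 <= (1 - th) * INR n -> lam * ((1 - th) * INR (S n) - 1) <= 1 ->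
  ~ asym_profile (S n) lam th s u v.
Proof.
  intros hlam hth hth_small hlam_small (hs & hv & hvu & hu & s_eq & s_gap).
  pose proof (pow_sub_le_mvt u v n ltac:(lra) ltac:(lra)) as mvt.
  assert (0 <= u ^ n) by (apply pow_le; lra).
  assert (gap_bound : s * (u - v) <= (1 - th) * lam * (INR (S n) * u ^ n * (u - v)))
    by (rewrite s_gap; apply Rmult_le_compat_l; nra).
  set (a := (1 - th) * INR (S n)) in *.
  assert (s_bound : s <= lam * (a * u ^ n))
    by (apply (Rmult_le_reg_r (u - v)); unfold a in *; nra).
  assert (0 < lam * v ^ S n) by (apply Rmult_lt_0_compat; [lra | apply pow_lt; lra]).
  assert (ha : INR n + 1 <= a * INR n) by (unfold a; rewrite S_INR; nra).
  pose proof (pow_gap_le a u n ltac:(lra) ha).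
  assert (lam * (a * u ^ n - u ^ S n) <= lam * (a - 1)) by (apply Rmult_le_compat_l; lra).
  nra.
Qed.

(* Under hypothesis (1) of the theorem with k >= 4 every solution is
   symmetric: the threshold k/(k+2) separates the two exclusion lemmas, and
   k >= 4 guarantees (1-th)(k-1) >= 1 below it. *)
Lemma solution_is_symmetric k lam th x y : (4 <= k)%nat -> 0 < lam -> 0 < th < 1 ->
  (th >= theta_c' k \/ (th < theta_c' k /\ lam < lambda_cr' k th)) ->
  is_TISGM_sol k lam th x y -> x = y.
Proof.
  intros hk hlam hth cond hsol.
  assert (no_asym : forall a b, is_TISGM_sol k lam th a b -> ~ b < a).
  { intros a b hab hba.
    destruct (asym_profile_of_sol k lam th a b hth hab hba) as (s & u & v & prof).
    destruct k as [|n]; [lia|].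
    assert (hn : 3 <= INR n) by (replace 3 with (INR 3) by (simpl; lra); apply le_INR; lia).
    unfold theta_c', lambda_cr' in cond. rewrite S_INR in cond.
    assert (inv_k : (INR n + 1) * / (INR n + 1) = 1) by (field; lra).
    assert (0 < / (INR n + 1)) by (apply Rinv_0_lt_compat; lra).
    destruct (Rle_or_lt (INR (S n)) (th * (INR (S n) + 2))) as [high | low].
    - exact (no_profile_high_theta n lam th s u v hlam ltac:(lra) high prof).
    - rewrite S_INR in low.
      apply (no_profile_low_lambda n lam th s u v hlam ltac:(lra) ltac:(nra)); [|exact prof].
      destruct cond as [c | [_ c]]; unfold Rdiv in c; [nra|].
      assert (hD : 0 < INR n + 1 - 1 - (INR n + 1) * th) by nra.
      assert ((INR n + 1 - 1 - (INR n + 1) * th) * / (INR n + 1 - 1 - (INR n + 1) * th) = 1)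
        by (field; lra).
      rewrite S_INR. nra. }
  destruct (Rtotal_order x y) as [lt | [eq | gt]]; auto.
  - exfalso. exact (no_asym y x (sol_swap _ _ _ _ _ hsol) lt).
  - exfalso. exact (no_asym x y hsol gt).
Qed.

Definition geom (n : nat) (p : R) : R := sum_f_R0 (fun i => p ^ i) n.

Lemma geom_S n p : geom (S n) p = geom n p + p ^ S n.
Proof. reflexivity. Qed.

Lemma geom_shift n p : geom (S n) p = 1 + p * geom n p.
Proof.
  induction n as [|n IH]; [unfold geom; simpl; ring|].
  rewrite (geom_S (S n)), IH at 1. rewrite geom_S. simpl. ring.
Qed.

Lemma geom_one n : geom n 1 = INR (S n).
Proof.
  induction n as [|n IH]; [unfold geom; simpl; ring|].
  rewrite geom_S, IH, pow1, (S_INR (S n)). reflexivity.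
Qed.

Lemma geom_ge1 n p : 0 <= p -> 1 <= geom n p.
Proof.
  intros hp. induction n as [|n IH]; [unfold geom; simpl; lra|].
  rewrite geom_S. pose proof (pow_le p (S n) hp). lra.
Qed.

Lemma geom_le n p : 1 <= p -> geom n p <= INR (S n) * p ^ n.
Proof.
  intros hp. induction n as [|n IH]; [unfold geom; simpl; lra|].
  rewrite geom_S, (S_INR (S n)).
  assert (p ^ n <= p ^ S n) by (apply Rle_pow; [lra | lia]).
  pose proof (pos_INR (S n)). nra.
Qed.

Lemma geom_continuous n : continuity (geom n).
Proof.
  induction n as [|n IH].
  - apply continuity_const. intros p q. reflexivity.
  - change (continuity (fun p => geom n p + p ^ S n)).
    apply (continuity_plus (geom n) (fun p => p ^ S n)); [exact IH|].
    apply derivable_continuous, derivable_pow.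
Qed.

(* Rational parametrization of asymmetric solutions with u/v = p.  If
   T = 1 + p Q = Q + p^k (as for Q = geom (k-1) p, T = geom k p) and
   W = (1-th) T - 1 - p^k solves lam Q^k W = T^k, then (p^k/W, 1/W) is a
   solution, with ratios u = pQ/T and v = Q/T. *)
Lemma asym_sol_of_param k lam th p Q T : 0 < lam -> th < 1 -> 0 < p -> 1 < p ^ k ->
  0 < Q -> T = 1 + p * Q -> T = Q + p ^ k ->
  lam * Q ^ k * ((1 - th) * T - 1 - p ^ k) = T ^ k ->
  exists x y, is_TISGM_sol k lam th x y /\ y < x.
Proof.
  intros hlam hth hp hP hQ hT1 hT2 root.
  set (P := p ^ k) in *. set (W := (1 - th) * T - 1 - P) in *.
  assert (hT : 0 < T) by nra.
  assert (0 < Q ^ k) by (apply pow_lt; lra).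
  assert (0 < T ^ k) by (apply pow_lt; lra).
  assert (0 < lam * Q ^ k) by (apply Rmult_lt_0_compat; lra).
  assert (hW : 0 < W) by nra.
  assert (hWinv : 0 < / W) by (apply Rinv_0_lt_compat; lra).
  assert (lam_eq : lam * Q ^ k / T ^ k = / W) by (rewrite <- root; field; nra).
  assert (ratio_u : (1 + P / W + th * / W) / (1 + P / W + / W) = p * Q / T).
  { replace (1 + P / W + th * / W) with ((W + P + th) / W) by (field; lra).
    replace (1 + P / W + / W) with ((W + P + 1) / W) by (field; lra).
    replace (W + P + th) with ((1 - th) * (p * Q)) by (unfold W; rewrite hT1; ring).
    replace (W + P + 1) with ((1 - th) * T) by (unfold W; ring).
    field. lra. }
  assert (ratio_v : (1 + th * (P / W) + / W) / (1 + P / W + / W) = Q / T).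
  { replace (1 + th * (P / W) + / W) with ((th * P + 1 + W) / W) by (field; lra).
    replace (1 + P / W + / W) with ((W + P + 1) / W) by (field; lra).
    replace (th * P + 1 + W) with ((1 - th) * Q) by (unfold W; rewrite hT2; ring).
    replace (W + P + 1) with ((1 - th) * T) by (unfold W; ring).
    field. lra. }
  exists (P / W), (/ W). repeat split.
  - apply Rdiv_lt_0_compat; lra.
  - exact hWinv.
  - rewrite ratio_u. unfold Rdiv. rewrite !Rpow_mult_distr, pow_inv, <- lam_eq. fold P. unfold Rdiv. ring.
  - rewrite ratio_v. unfold Rdiv. rewrite Rpow_mult_distr, pow_inv, <- lam_eq. unfold Rdiv. ring.
  - unfold Rdiv. nra.
Qed.

(* Above the critical activity the parametrizing equation has a root p > 1:
   at p = 1 it reads lam k^k (k-1-(k+1)th) = (k+1)^k, whose left side is the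
   larger one, while at p = k/th the factor W is negative. *)
Lemma param_root_exists m lam th : 0 < lam -> 0 < th < 1 ->
  (INR (S m) + 1) ^ S m < lam * INR (S m) ^ S m * (INR (S m) - 1 - (INR (S m) + 1) * th) ->
  exists p, 1 < p /\
    lam * geom m p ^ S m * ((1 - th) * geom (S m) p - 1 - p ^ S m) = geom (S m) p ^ S m.
Proof.
  intros hlam hth hcrit.
  set (F := fun p => geom (S m) p ^ S m
                     - lam * geom m p ^ S m * ((1 - th) * geom (S m) p - 1 - p ^ S m)).
  assert (cont : continuity F).
  { pose proof (geom_continuous m). pose proof (geom_continuous (S m)). unfold F. reg. }
  assert (F_at_1 : F 1 < 0).
  { unfold F. rewrite !geom_one, pow1, (S_INR (S m)).
    replace ((1 - th) * (INR (S m) + 1) - 1 - 1) with (INR (S m) - 1 - (INR (S m) + 1) * th)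
      by ring.
    lra. }
  set (K := INR (S m)) in *.
  assert (hK : 1 <= K) by (unfold K; rewrite S_INR; pose proof (pos_INR m); lra).
  set (p1 := K / th).
  assert (th_p1 : th * p1 = K) by (unfold p1; field; lra).
  assert (hp1 : 1 < p1) by nra.
  assert (F_at_p1 : 0 < F p1).
  { unfold F.
    pose proof (geom_le m p1 ltac:(lra)) as Q_le. fold K in Q_le.
    pose proof (geom_ge1 m p1 ltac:(lra)).
    pose proof (geom_ge1 (S m) p1 ltac:(lra)).
    assert (0 < p1 ^ m) by (apply pow_lt; lra).
    assert (W_neg : (1 - th) * geom (S m) p1 - 1 - p1 ^ S m < 0).
    { rewrite geom_S. change (p1 ^ S m) with (p1 * p1 ^ m). nra. }
    assert (0 < geom (S m) p1 ^ S m) by (apply pow_lt; lra).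
    assert (0 < lam * geom m p1 ^ S m) by (apply Rmult_lt_0_compat; [lra | apply pow_lt; lra]).
    nra. }
  destruct (IVT F 1 p1 cont hp1 F_at_1 F_at_p1) as [p [hp F_at_p]].
  exists p. split.
  - destruct (Req_dec p 1) as [-> | ne]; lra.
  - unfold F in F_at_p. lra.
Qed.

Lemma asym_solution_exists k lam th : (1 <= k)%nat -> 0 < lam -> 0 < th < 1 ->
  (INR k + 1) ^ k < lam * INR k ^ k * (INR k - 1 - (INR k + 1) * th) ->
  exists x y, is_TISGM_sol k lam th x y /\ y < x.
Proof.
  intros hk hlam hth hcrit.
  destruct k as [|m]; [lia|].
  destruct (param_root_exists m lam th hlam hth hcrit) as [p [hp root]].
  apply (asym_sol_of_param (S m) lam th p (geom m p) (geom (S m) p)); try lra.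
  - apply Rlt_pow_R1; [lra | lia].
  - pose proof (geom_ge1 m p ltac:(lra)). lra.
  - apply geom_shift.
  - apply geom_S.
Qed.

Lemma lambda_cr_spec k lam th : (1 <= k)%nat -> th < theta_c k -> lam > lambda_cr k th ->
  (INR k + 1) ^ k < lam * INR k ^ k * (INR k - 1 - (INR k + 1) * th).
Proof.
  intros hk hth hlam.
  unfold theta_c, lambda_cr in *.
  set (K := INR k) in *.
  assert (hK : 1 <= K) by (unfold K; replace 1 with (INR 1) by reflexivity; apply le_INR; lia).
  set (D := K - 1 - (K + 1) * th) in *.
  assert (hD : 0 < D).
  { unfold Rdiv in hth. assert ((K + 1) * / (K + 1) = 1) by (field; lra).
    assert (0 < / (K + 1)) by (apply Rinv_0_lt_compat; lra). unfold D. nra. }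
  assert (hKk : 0 < K ^ k) by (apply pow_lt; lra).
  replace (((K + 1) / K) ^ k) with ((K + 1) ^ k / K ^ k) in hlam
    by (unfold Rdiv; rewrite Rpow_mult_distr, pow_inv; reflexivity).
  apply (Rmult_lt_compat_r (D * K ^ k)) in hlam; [|nra].
  replace (1 / D * ((K + 1) ^ k / K ^ k) * (D * K ^ k)) with ((K + 1) ^ k) in hlam
    by (field; lra).
  lra.
Qed.

Theorem mainTheorem11 (k : nat) (lam theta : R)
  (hk : (4 <= k)%nat) (hlam : 0 < lam) (hth0 : 0 < theta) (hth1 : theta < 1) :
  ((theta >= theta_c' k \/ (theta < theta_c' k /\ lam < lambda_cr' k theta)) ->
     exactly_one_TISGM k lam theta) /\
  ((theta < theta_c k /\ lam > lambda_cr k theta) ->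
     at_least_three_TISGM k lam theta).
Proof.
  assert (hth : 0 < theta < 1) by lra.
  destruct (sym_solution_exists k lam theta ltac:(lia) hlam hth) as [x0 hx0].
  split.
  - intros cond. exists x0, x0. split; [exact hx0|].
    intros x y hxy.
    pose proof (solution_is_symmetric k lam theta x y hk hlam hth cond hxy) as <-.
    pose proof (sym_solution_unique k lam theta x x0 ltac:(lia) hlam hth hxy hx0).
    split; assumption.
  - intros [hth_c hlam_cr].
    pose proof (lambda_cr_spec k lam theta ltac:(lia) hth_c hlam_cr) as hcrit.
    destruct (asym_solution_exists k lam theta ltac:(lia) hlam hth hcrit)
      as (x & y & hxy & hyx).
    exists x0, x0, x, y, y, x.
    refine (conj hx0 (conj hxy (conj (sol_swap _ _ _ _ _ hxy) _))).
    repeat split; intros E; injection E; lra.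
Qed.
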